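(* For $0<x<\frac12$, $$\gamma_1\left(x+\tfrac12\right)-\gamma_1\left(\tfrac12-x\right)=2[\gamma_1(2x)-\gamma_1(1-2x)]-[\gamma_1(x)-\gamma_1(1-x)]-2\pi\log 2\cdot\cot 2\pi x.$$
   Context: For $x>0$ let $\zeta(s,x)=\sum_{n=0}^{\infty}(n+x)^{-s}$ ($\operatorname{Re}s>1$) be the Hurwitz zeta function, analytically continued to $\mathbb{C}\setminus\{1\}$. The generalised Stieltjes constants $\gamma_n(x)$ are defined by the Laurent expansion $\zeta(s,x)=\frac{1}{s-1}+\sum_{n=0}^{\infty}\frac{(-1)^n}{n!}\gamma_n(x)(s-1)^n$ about $s=1$. *)

From Stdlib Require Import Reals ClassicalEpsilon.
From Coquelicot Require Import Coquelicot.
Open Scope R_scope.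

Definition hurwitz_zeta (s x : R) : R :=
  Series (fun n : nat => / Rpower (INR n + x) s).

(* c is the sequence of generalised Stieltjes constants at x: the Laurent
   expansion  zeta(s,x) = 1/(s-1) + sum_n (-1)^n/n! c_n (s-1)^n  holds
   (with convergent series) for all real s in a right neighbourhood of 1. *)
Definition is_stieltjes_seq (x : R) (c : nat -> R) : Prop :=
  exists d : R, 0 < d /\
    forall s : R, 1 < s < 1 + d ->
      is_series (fun n : nat => (-1) ^ n / INR (Factorial.fact n) * c n * (s - 1) ^ n)
                (hurwitz_zeta s x - 1 / (s - 1)).

(* gamma_n(x): the (unique) such sequence, chosen by Hilbert's epsilon. *)
Definition stieltjes_seq (x : R) : nat -> R :=
  epsilon (inhabits (fun _ : nat => 0)) (is_stieltjes_seq x).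

Definition gen_stieltjes (n : nat) (x : R) : R := stieltjes_seq x n.

Definition cot (t : R) : R := cos t / sin t.

(* The Laurent coefficients of ζ(s,y) at s = 1 are found termwise.  Writing
     ζ(1+t,y) - 1/t = Σ_n [(n+y)^(-1-t) - ((n+y)^(-t) - (n+y+1)^(-t))/t] + (y^(-t) - 1)/t,
   each bracket and the last term are power series in t, and the resulting double series
   converges absolutely for 0 < t < 1.  This gives γ_n(y) as an explicit series, and since a
   power series is determined by its values on an interval (0, d), the Laurent coefficients
   are unique.
   Comparing the two sides of ζ(s,y) + ζ(s,y+1/2) = 2^s ζ(s,2y) at orders 0 and 1 in s - 1
   gives γ0(y) + γ0(y+1/2) = 2 γ0(2y) + 2 ln 2 and
   γ1(y) + γ1(y+1/2) = 2 γ1(2y) - 2 ln 2 γ0(2y) - ln² 2.  Subtracting the second identity at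
   y = x from the one at y = 1/2 - x leaves 2 ln 2 (γ0(2x) - γ0(1-2x)), which is
   2π ln 2 cot 2πx by the reflection formula γ0(y) - γ0(1-y) = π cot πy.  The latter is
   Herglotz's trick: the difference D of its two sides is continuous on (0,1), odd about 1/2,
   tends to 0 at 0 and satisfies D(y/2) + D((y+1)/2) = 2 D(y), hence vanishes. *)

From Stdlib Require Import Reals Lra Lia Psatz Factorial ClassicalEpsilon.
From Coquelicot Require Import Coquelicot.
Open Scope R_scope.

(** * Series of real numbers *)

Lemma ex_series_Rabs_le (a b : nat -> R) :
  (forall n, Rabs (a n) <= b n) -> ex_series b -> ex_series a.
Proof. exact (@ex_series_le R_AbsRing R_CompleteNormedModule a b). Qed.

Lemma is_series_telescope (T : nat -> R) (l : R) :
  is_lim_seq T l -> is_series (fun n => T n - T (S n)) (T O - l).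
Proof.
  intro HT. change (is_lim_seq (sum_n (fun n => T n - T (S n))) (T O - l)).
  apply is_lim_seq_ext with (fun n => T O - T (S n)).
  - induction n as [|n IH]; rewrite ?sum_O, ?sum_Sn, <- ?IH; cbn; unfold plus; cbn; ring.
  - apply is_lim_seq_minus'; [apply is_lim_seq_const|].
    now apply (is_lim_seq_incr_1 T l).
Qed.

Lemma sum_n_le_Series (b : nat -> R) (N : nat) :
  (forall n, 0 <= b n) -> ex_series b -> sum_n b N <= Series b.
Proof.
  intros Hb Hex.
  apply (is_lim_seq_incr_compare (sum_n b) (Series b) (Series_correct _ Hex)).
  intro n. rewrite sum_Sn. specialize (Hb (S n)). cbn; unfold plus; cbn; lra.
Qed.

Lemma Rabs_Series_le (a b : nat -> R) :
  (forall n, Rabs (a n) <= b n) -> ex_series b -> Rabs (Series a) <= Series b.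
Proof.
  intros Hab Hb.
  assert (Habs : ex_series (fun n => Rabs (a n))).
  { apply (ex_series_Rabs_le _ b); [|exact Hb]. intro n. rewrite Rabs_Rabsolu. apply Hab. }
  eapply Rle_trans; [apply Series_Rabs, Habs|].
  apply Series_le; [|exact Hb]. intro n. split; [apply Rabs_pos|apply Hab].
Qed.

Lemma Rabs_Series_tail_le (a b : nat -> R) (N : nat) :
  (forall n, Rabs (a n) <= b n) -> ex_series b ->
  Rabs (Series a - sum_n a N) <= Series b - sum_n b N.
Proof.
  intros Hab Hb.
  assert (Ha : ex_series a) by (apply (ex_series_Rabs_le _ b); auto).
  rewrite (Series_incr_n a (S N)), (Series_incr_n b (S N)), <- !sum_n_Reals; try lia; auto.
  cbn [pred]. replace (sum_n a N + _ - sum_n a N) with (Series (fun k => a (S N + k)%nat)) by ring.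
  replace (sum_n b N + _ - sum_n b N) with (Series (fun k => b (S N + k)%nat)) by ring.
  apply Rabs_Series_le; [intro; apply Hab|].
  now apply (ex_series_incr_n b (S N)).
Qed.

Lemma filterlim_sum_n {T : Type} {F : (T -> Prop) -> Prop} {FF : Filter F}
    (f : T -> nat -> R) (g : nat -> R) :
  (forall n, filterlim (fun z => f z n) F (locally (g n))) ->
  forall N, filterlim (fun z => sum_n (f z) N) F (locally (sum_n g N)).
Proof.
  intros Hfg N. induction N as [|N IH].
  - rewrite sum_O. apply (filterlim_ext (fun z => f z O)); [intro; now rewrite sum_O|apply Hfg].
  - rewrite sum_Sn.
    apply (filterlim_ext (fun z => plus (sum_n (f z) N) (f z (S N)))); [intro; now rewrite sum_Sn|].
    eapply filterlim_comp_2; [exact IH|apply Hfg|apply (@filterlim_plus R_AbsRing R_NormedModule)].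
Qed.

Lemma filterlim_Series_dominated {T : Type} {F : (T -> Prop) -> Prop} {FF : Filter F}
    (f : T -> nat -> R) (g M : nat -> R) :
  (forall n, filterlim (fun z => f z n) F (locally (g n))) ->
  F (fun z => forall n, Rabs (f z n) <= M n) ->
  (forall n, Rabs (g n) <= M n) -> ex_series M ->
  filterlim (fun z => Series (f z)) F (locally (Series g)).
Proof.
  intros Hfg Hdom Hg HM.
  apply filterlim_locally. intro eps.
  assert (Htail : eventually (fun N => Rabs (sum_n M N - Series M) < eps / 3)).
  { assert (HS : is_lim_seq (sum_n M) (Series M)) by exact (Series_correct _ HM).
    apply (is_lim_seq_spec (sum_n M)) in HS.
    exact (HS (mkposreal (eps / 3) ltac:(destruct eps; cbn; lra))). }
  destruct Htail as [N HN]. specialize (HN N (le_n N)).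
  pose proof (filterlim_sum_n f g Hfg N) as Hsum.
  assert (Hnear : F (fun z => Rabs (sum_n (f z) N - sum_n g N) < eps / 3)).
  { apply (Hsum (fun y => Rabs (y - sum_n g N) < eps / 3)).
    exists (mkposreal (eps / 3) ltac:(destruct eps; cbn; lra)). now intros y Hy. }
  generalize (filter_and _ _ Hdom Hnear). apply filter_imp. intros z [Hz Hzsum].
  change (Rabs (Series (f z) - Series g) < eps).
  pose proof (Rabs_Series_tail_le (f z) M N Hz HM) as Tz.
  pose proof (Rabs_Series_tail_le g M N Hg HM) as Tg.
  rewrite Rabs_minus_sym in HN.
  set (A := Series (f z) - sum_n (f z) N) in *. set (B := sum_n (f z) N - sum_n g N) in *.
  set (C := Series g - sum_n g N) in *.
  replace (Series (f z) - Series g) with (A + B + - C) by (unfold A, B, C; ring).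
  pose proof (Rabs_triang (A + B) (- C)). pose proof (Rabs_triang A B).
  rewrite Rabs_Ropp in *. pose proof (Rle_abs (Series M - sum_n M N)). lra.
Qed.

Lemma Rabs_sum_n_le (a b : nat -> R) (N : nat) :
  (forall n, Rabs (a n) <= b n) -> Rabs (sum_n a N) <= sum_n b N.
Proof.
  intro Hab. rewrite !sum_n_Reals.
  eapply Rle_trans; [apply sum_f_R0_triangle|]. apply sum_Rle. intros; apply Hab.
Qed.

Lemma is_series_Series_exchange (a b : nat -> nat -> R) (B r : nat -> R) :
  (forall n k, Rabs (a n k) <= b n k) ->
  (forall n, is_series (b n) (B n)) -> ex_series B ->
  (forall n, is_series (a n) (r n)) ->
  is_series (fun k => Series (fun n => a n k)) (Series r).
Proof.
  intros Hab Hb HB Har.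
  assert (Hpartial : forall K n, Rabs (sum_n (a n) K) <= B n).
  { intros K n. eapply Rle_trans; [apply Rabs_sum_n_le, Hab|].
    rewrite <- (is_series_unique _ _ (Hb n)). apply sum_n_le_Series; [|now exists (B n)].
    intro k. eapply Rle_trans; [apply Rabs_pos|apply Hab]. }
  assert (Hex : forall K, ex_series (fun n => sum_n (a n) K)).
  { intro K. apply (ex_series_Rabs_le _ B); [|exact HB]. apply Hpartial. }
  assert (Hswap : forall K, sum_n (fun k => Series (fun n => a n k)) K = Series (fun n => sum_n (a n) K)).
  { induction K as [|K IH].
    - rewrite sum_O. apply Series_ext. intro; now rewrite sum_O.
    - rewrite sum_Sn, IH. change plus with Rplus.
      rewrite <- Series_plus; [apply Series_ext; intro; now rewrite sum_Sn|apply Hex|].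
      apply (ex_series_ext (fun n => sum_n (a n) (S K) - sum_n (a n) K)).
      { intro n. rewrite sum_Sn. change plus with Rplus. lra. }
      apply (ex_series_minus (V := R_NormedModule)); apply Hex. }
  change (is_lim_seq (sum_n (fun k => Series (fun n => a n k))) (Series r)).
  apply (is_lim_seq_ext (fun K => Series (fun n => sum_n (a n) K))); [intro; now rewrite Hswap|].
  apply (filterlim_Series_dominated (fun K n => sum_n (a n) K) r B); [apply Har| |intro n|exact HB].
  - apply filter_forall. intros K n. apply Hpartial.
  - rewrite <- (is_series_unique _ _ (Har n)), <- (is_series_unique _ _ (Hb n)).
    apply Rabs_Series_le; [apply Hab|now exists (B n)].
Qed.

Lemma is_series_exp (u : R) : is_series (fun k => u ^ k / INR (fact k)) (exp u).
Proof.
  generalize (is_exp_Reals u). apply is_series_ext. intro k. now rewrite pow_n_pow.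
Qed.

Lemma is_series_exp_minus_1 (u : R) :
  is_series (fun k => u ^ S k / INR (fact (S k))) (exp u - 1).
Proof.
  apply (is_series_incr_1 (fun k => u ^ k / INR (fact k))).
  match goal with |- is_series _ ?l => replace l with (exp u) end;
    [apply is_series_exp|cbn; unfold plus; cbn; field].
Qed.

(** * The Hurwitz zeta function for s > 1 *)

Lemma Rpower_pos (a s : R) : 0 < Rpower a s.
Proof. apply exp_pos. Qed.

Lemma is_lim_seq_Rpower_opp (y e : R) : 0 < y -> 0 < e ->
  is_lim_seq (fun n => Rpower (INR n + y) (- e)) 0.
Proof.
  intros Hy He. apply is_lim_seq_spec. intros [eps Heps]. cbn.
  set (X := Rpower eps (- / e)).
  destruct (INR_unbounded X) as [N HN].
  exists N. intros n Hn.
  rewrite Rminus_0_r, Rabs_pos_eq by (left; apply Rpower_pos).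
  assert (HXn : X < INR n + y) by (apply le_INR in Hn; pose proof (Rpower_pos eps (- / e)); lra).
  assert (Hpow : Rpower X e < Rpower (INR n + y) e)
    by (apply Rlt_Rpower_l; [exact He|split; [apply Rpower_pos|exact HXn]]).
  unfold X in Hpow. rewrite Rpower_mult in Hpow.
  replace (- / e * e) with (- (1)) in Hpow by (field; lra).
  rewrite Rpower_Ropp, Rpower_1 in Hpow by lra.
  rewrite Rpower_Ropp.
  pose proof (Rpower_pos (INR n + y) e).
  apply Rinv_lt_contravar in Hpow; [now rewrite Rinv_inv in Hpow|].
  apply Rmult_lt_0_compat; [now apply Rinv_0_lt_compat|lra].
Qed.

Lemma Rpower_inv_le_diff (a s : R) : 0 < a -> 1 < s ->
  / Rpower (a + 1) s <= (Rpower a (1 - s) - Rpower (a + 1) (1 - s)) / (s - 1).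
Proof.
  intros Ha Hs.
  destruct (MVT_cor2 (fun u => Rpower u (1 - s)) (fun u => (1 - s) * Rpower u (1 - s - 1)) a (a + 1))
    as [c [Hc Hac]]; [lra|intros; apply derivable_pt_lim_power; lra|].
  replace (1 - s - 1) with (- s) in Hc by ring.
  rewrite Rpower_Ropp in Hc. replace (a + 1 - a) with 1 in Hc by ring.
  pose proof (Rpower_pos c s) as Hcs.
  replace ((Rpower a (1 - s) - Rpower (a + 1) (1 - s)) / (s - 1)) with (/ Rpower c s)
    by (rewrite <- Ropp_minus_distr, Hc; field; lra).
  apply Rinv_le_contravar; [exact Hcs|]. left; apply Rlt_Rpower_l; lra.
Qed.

Lemma ex_series_hurwitz (s y : R) : 1 < s -> 0 < y ->
  ex_series (fun n => / Rpower (INR n + y) s).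
Proof.
  intros Hs Hy.
  apply (ex_series_incr_1 (fun n => / Rpower (INR n + y) s)).
  set (T := fun n => Rpower (INR n + y) (1 - s)).
  assert (HT : is_series (fun n => T n - T (S n)) (T O - 0)).
  { apply is_series_telescope. unfold T. replace (1 - s) with (- (s - 1)) by ring.
    apply is_lim_seq_Rpower_opp; lra. }
  apply (ex_series_Rabs_le _ (fun n => / (s - 1) * (T n - T (S n)))).
  - intro n. rewrite Rabs_pos_eq by (left; apply Rinv_0_lt_compat, Rpower_pos).
    unfold T. rewrite !S_INR. replace (INR n + 1 + y) with (INR n + y + 1) by ring.
    rewrite Rmult_comm. apply Rpower_inv_le_diff; [pose proof (pos_INR n)|]; lra.
  - eexists. apply (is_series_scal_l (V := R_NormedModule)). exact HT.
Qed.

Lemma is_series_pairs (u : nat -> R) (l : R) :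
  is_series u l -> is_series (fun n => u (2 * n)%nat + u (S (2 * n))) l.
Proof.
  intro Hu. change (is_lim_seq (sum_n (fun n => u (2 * n)%nat + u (S (2 * n)))) l).
  apply is_lim_seq_ext with (fun N => sum_n u (S (2 * N))).
  - induction n as [|n IH].
    + rewrite sum_O. change (2 * 0)%nat with 0%nat. rewrite sum_Sn, sum_O. reflexivity.
    + rewrite (sum_Sn (fun n => u (2 * n)%nat + u (S (2 * n))) n), <- IH.
      replace (S (2 * S n)) with (S (S (S (2 * n)))) by lia.
      replace (2 * S n)%nat with (S (S (2 * n))) by lia.
      rewrite !sum_Sn. change plus with Rplus. lra.
  - apply (is_lim_seq_subseq (sum_n u) l (fun N => S (2 * N))); [|exact Hu].
    apply eventually_subseq. intro; lia.
Qed.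

Lemma hurwitz_zeta_duplication (s y : R) : 1 < s -> 0 < y ->
  hurwitz_zeta s y + hurwitz_zeta s (y + 1 / 2) = Rpower 2 s * hurwitz_zeta s (2 * y).
Proof.
  intros Hs Hy. unfold hurwitz_zeta.
  pose proof (Rpower_pos 2 s) as H2s.
  rewrite <- Series_plus by (apply ex_series_hurwitz; lra).
  rewrite <- (is_series_unique _ _
                (is_series_pairs _ _ (Series_correct _ (ex_series_hurwitz s (2 * y) Hs ltac:(lra))))).
  rewrite <- Series_scal_l. apply Series_ext. intro n.
  rewrite S_INR, mult_INR. replace (INR 2) with 2 by (cbn; ring).
  replace (2 * INR n + 2 * y) with (2 * (INR n + y)) by ring.
  replace (2 * INR n + 1 + 2 * y) with (2 * (INR n + (y + 1 / 2))) by field.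
  pose proof (pos_INR n).
  rewrite <- !Rpower_mult_distr by lra.
  pose proof (Rpower_pos (INR n + y) s). pose proof (Rpower_pos (INR n + (y + 1 / 2)) s).
  field. lra.
Qed.

(** * The Laurent expansion at s = 1 *)

(* Since (ln (a+1)^(k+1) - ln a^(k+1)) / (k+1) is the integral of ln u ^ k / u over [a, a+1],
   [(-1)^k / k! * hurwitz_laurent_term k a] is the coefficient of t^k in
   a^(-1-t) - ∫_a^(a+1) u^(-1-t) du. *)
Definition hurwitz_laurent_term (k : nat) (a : R) : R :=
  ln a ^ k / a - (ln (a + 1) ^ S k - ln a ^ S k) / INR (S k).

Definition stieltjes_coef (y : R) (k : nat) : R :=
  Series (fun n => hurwitz_laurent_term k (INR n + y)) - ln y ^ S k / INR (S k).

Lemma is_series_hurwitz_laurent_term (a t : R) : 0 < a -> t <> 0 ->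
  is_series (fun k => (-1) ^ k / INR (fact k) * hurwitz_laurent_term k a * t ^ k)
    (/ Rpower a (1 + t) - (Rpower a (- t) - Rpower (a + 1) (- t)) / t).
Proof.
  intros Ha Ht.
  pose proof (is_series_exp (- t * ln a)) as Ea.
  pose proof (is_series_exp_minus_1 (- t * ln a)) as Ea1.
  pose proof (is_series_exp_minus_1 (- t * ln (a + 1))) as Eb1.
  pose proof (is_series_minus _ _ _ _ Ea1 Eb1) as Eab.
  apply (is_series_scal_l (/ t)) in Eab. apply (is_series_scal_l (/ a)) in Ea.
  pose proof (is_series_minus _ _ _ _ Ea Eab) as E.
  replace (/ Rpower a (1 + t) - (Rpower a (- t) - Rpower (a + 1) (- t)) / t)
    with (minus (scal (/ a) (exp (- t * ln a)))
                (scal (/ t) (minus (exp (- t * ln a) - 1) (exp (- t * ln (a + 1)) - 1)))).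
  2: { cbn. unfold minus, plus, opp, scal; cbn. unfold mult; cbn. unfold Rpower.
       replace ((1 + t) * ln a) with (ln a + t * ln a) by ring.
       replace (- t * ln a) with (- (t * ln a)) by ring.
       rewrite exp_plus, exp_Ropp, exp_ln by exact Ha.
       pose proof (exp_pos (t * ln a)). field. lra. }
  revert E. apply is_series_ext. intro k.
  unfold minus, plus, opp, scal; cbn -[fact INR pow]. unfold mult; cbn -[fact INR pow].
  unfold hurwitz_laurent_term. rewrite fact_simpl, mult_INR.
  replace (- t * ln a) with (-1 * t * ln a) by ring.
  replace (- t * ln (a + 1)) with (-1 * t * ln (a + 1)) by ring.
  rewrite !Rpow_mult_distr. cbn [pow].
  pose proof (INR_fact_lt_0 k). pose proof (lt_0_INR (S k) (Nat.lt_0_succ k)).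
  field. repeat split; lra.
Qed.

Lemma binomial_two_terms_le (x : R) (k : nat) : 0 <= x ->
  INR k * x ^ pred k + x ^ k <= (x + 1) ^ k.
Proof.
  intro Hx. induction k as [|k IH]; [cbn; lra|].
  cbn [pred]. rewrite S_INR. cbn [pow].
  assert (E : x * (INR k * x ^ pred k) = INR k * x ^ k) by (destruct k; cbn; ring).
  pose proof (pow_le x k Hx). pose proof (Rmult_le_pos _ _ (pos_INR k) (pow_le x (pred k) Hx)).
  nra.
Qed.

(* Two mean value steps for f u = ln u ^ k / u: the subtracted term is f xi for some xi in
   (a, a + 1), and f a - f xi = f' eta * (a - xi). *)
Lemma hurwitz_laurent_term_mvt (a : R) (k : nat) : 0 < a ->
  exists eta, a < eta < a + 1 /\
    Rabs (hurwitz_laurent_term k a) <= Rabs ((INR k * ln eta ^ pred k - ln eta ^ k) / eta ^ 2).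
Proof.
  intro Ha. pose proof (lt_0_INR (S k) (Nat.lt_0_succ k)) as Hk.
  destruct (MVT_cor2 (fun u => ln u ^ S k / INR (S k)) (fun u => ln u ^ k / u) a (a + 1))
    as [xi [Hxi Haxi]]; [lra| |].
  { intros c Hc. apply is_derive_Reals. auto_derive; [lra|].
    change (match k with 0%nat => 1 | S _ => INR k + 1 end) with (INR (S k)). field. lra. }
  destruct (MVT_cor2 (fun u => ln u ^ k / u) (fun u => (INR k * ln u ^ pred k - ln u ^ k) / u ^ 2) a xi)
    as [eta [Heta Haeta]]; [lra| |].
  { intros c Hc. apply is_derive_Reals. auto_derive; [lra|].
    destruct k; cbn [pred]; field; lra. }
  cbv beta in Hxi, Heta. exists eta. split; [lra|].
  assert (Hmean : (ln (a + 1) ^ S k - ln a ^ S k) / INR (S k) = ln xi ^ k / xi)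
    by (unfold Rdiv in *; rewrite Rmult_minus_distr_r; lra).
  unfold hurwitz_laurent_term. rewrite Hmean.
  rewrite <- Ropp_minus_distr, Rabs_Ropp, Heta, Rabs_mult.
  rewrite <- (Rmult_1_r (Rabs (_ / eta ^ 2))) at 2.
  apply Rmult_le_compat_l; [apply Rabs_pos|]. rewrite Rabs_pos_eq; lra.
Qed.

Definition ln_max (a : R) : R := Rmax (Rabs (ln a)) (Rabs (ln (a + 1))).

Lemma Rabs_hurwitz_laurent_term_le (a : R) (k : nat) : 0 < a ->
  Rabs (hurwitz_laurent_term k a) <= (ln_max a + 1) ^ k / a ^ 2.
Proof.
  intro Ha. destruct (hurwitz_laurent_term_mvt a k Ha) as [eta [Heta Hw]].
  eapply Rle_trans; [exact Hw|].
  assert (Hl : Rabs (ln eta) <= ln_max a).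
  { assert (ln a < ln eta < ln (a + 1)) by (split; apply ln_increasing; lra).
    pose proof (Rmax_l (Rabs (ln a)) (Rabs (ln (a + 1)))) as Hmax_l.
    pose proof (Rmax_r (Rabs (ln a)) (Rabs (ln (a + 1)))) as Hmax_r.
    apply Rabs_le_between in Hmax_l, Hmax_r. unfold ln_max. apply Rabs_le. lra. }
  assert (Hnum : Rabs (INR k * ln eta ^ pred k - ln eta ^ k) <= (ln_max a + 1) ^ k).
  { eapply Rle_trans; [apply Rabs_triang|].
    rewrite Rabs_Ropp, Rabs_mult, <- !RPow_abs, (Rabs_pos_eq (INR k)) by apply pos_INR.
    eapply Rle_trans; [apply binomial_two_terms_le, Rabs_pos|].
    apply pow_incr. pose proof (Rabs_pos (ln eta)). lra. }
  unfold Rdiv. rewrite Rabs_mult, Rabs_inv, (Rabs_pos_eq (eta ^ 2)) by (apply pow_le; lra).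
  apply Rmult_le_compat; [apply Rabs_pos|left; apply Rinv_0_lt_compat, pow_lt; lra|exact Hnum|].
  apply Rinv_le_contravar; [apply pow_lt; lra|apply pow_incr; lra].
Qed.

Lemma Rabs_laurent_series_term_le (a t : R) (k : nat) : 0 < a -> 0 <= t ->
  Rabs ((-1) ^ k / INR (fact k) * hurwitz_laurent_term k a * t ^ k)
    <= t ^ k / INR (fact k) * ((ln_max a + 1) ^ k / a ^ 2).
Proof.
  intros Ha Ht. pose proof (INR_fact_lt_0 k).
  rewrite !Rabs_mult, Rabs_div, <- !RPow_abs by lra.
  rewrite Rabs_m1, pow1, (Rabs_pos_eq t), (Rabs_pos_eq (INR (fact k))) by lra.
  replace (t ^ k / INR (fact k) * ((ln_max a + 1) ^ k / a ^ 2))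
    with (1 / INR (fact k) * ((ln_max a + 1) ^ k / a ^ 2) * t ^ k) by (field; lra).
  apply Rmult_le_compat_r; [now apply pow_le|].
  apply Rmult_le_compat_l; [left; apply Rdiv_lt_0_compat; lra|].
  now apply Rabs_hurwitz_laurent_term_le.
Qed.

Lemma is_series_exp_div (t M b : R) :
  is_series (fun k => t ^ k / INR (fact k) * (M ^ k / b)) (exp (t * M) / b).
Proof.
  rewrite Rdiv_def, Rmult_comm.
  eapply is_series_ext; [|exact (is_series_scal_l (V := R_NormedModule) _ _ _ (is_series_exp _))].
  intro k. cbn -[pow fact INR]; unfold mult; cbn -[pow fact INR].
  rewrite Rpow_mult_distr. unfold Rdiv; ring.
Qed.

Lemma Rpower_2 (a : R) : 0 < a -> Rpower a 2 = a ^ 2.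
Proof. intro. replace 2 with (INR 2) by (cbn; ring). now apply Rpower_pow. Qed.

Lemma laurent_majorant_le (a t : R) : 1 <= a -> 0 < t < 1 ->
  exp (t * (ln_max a + 1)) / a ^ 2 <= 2 * exp t / Rpower a (2 - t).
Proof.
  intros Ha Ht.
  assert (Hmax : ln_max a = ln (a + 1)).
  { unfold ln_max. assert (0 <= ln a) by (rewrite <- ln_1; apply ln_le; lra).
    assert (ln a < ln (a + 1)) by (apply ln_increasing; lra).
    rewrite !Rabs_pos_eq by lra. apply Rmax_right. lra. }
  rewrite Hmax. replace (t * (ln (a + 1) + 1)) with (t * ln (a + 1) + t) by ring.
  rewrite exp_plus. change (exp (t * ln (a + 1))) with (Rpower (a + 1) t).
  assert (Hshift : Rpower (a + 1) t <= 2 * Rpower a t).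
  { apply Rle_trans with (Rpower (2 * a) t); [apply Rle_Rpower_l; lra|].
    rewrite <- Rpower_mult_distr by lra.
    apply Rmult_le_compat_r; [left; apply Rpower_pos|].
    rewrite <- (Rpower_1 2) at 2 by lra. apply Rle_Rpower; lra. }
  replace (2 - t) with (2 + - t) by ring. rewrite Rpower_plus, Rpower_Ropp, Rpower_2 by lra.
  pose proof (Rpower_pos a t). pose proof (exp_pos t). assert (0 < a ^ 2) by (apply pow_lt; lra).
  replace (2 * exp t / (a ^ 2 * / Rpower a t)) with (2 * Rpower a t * exp t / a ^ 2) by (field; lra).
  unfold Rdiv. apply Rmult_le_compat_r; [left; now apply Rinv_0_lt_compat|].
  apply Rmult_le_compat_r; lra.
Qed.

Lemma ex_series_laurent_majorant (y t : R) : 0 < y -> 0 < t < 1 ->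
  ex_series (fun n => exp (t * (ln_max (INR n + y) + 1)) / (INR n + y) ^ 2).
Proof.
  intros Hy Ht.
  apply (ex_series_incr_1 (fun n => exp (t * (ln_max (INR n + y) + 1)) / (INR n + y) ^ 2)).
  apply (ex_series_Rabs_le _ (fun n => 2 * exp t * / Rpower (INR n + (y + 1)) (2 - t))).
  - intro n. pose proof (pos_INR n).
    rewrite Rabs_pos_eq
      by (apply Rmult_le_pos;
          [left; apply exp_pos|left; apply Rinv_0_lt_compat, pow_lt; rewrite S_INR; lra]).
    replace (INR n + (y + 1)) with (INR (S n) + y) by (rewrite S_INR; ring).
    apply laurent_majorant_le; [rewrite S_INR|]; lra.
  - destruct (ex_series_hurwitz (2 - t) (y + 1)) as [l Hl]; [lra|lra|].
    exists (2 * exp t * l). now apply (is_series_scal_l (V := R_NormedModule)).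
Qed.

Lemma is_series_Rpower_opp_minus_1 (y t : R) : 0 < y -> t <> 0 ->
  is_series (fun k => (-1) ^ k / INR (fact k) * (- (ln y ^ S k / INR (S k))) * t ^ k)
            ((Rpower y (- t) - 1) / t).
Proof.
  intros Hy Ht.
  pose proof (is_series_exp_minus_1 (- t * ln y)) as Hexp.
  apply (is_series_scal_l (V := R_NormedModule) (/ t)) in Hexp.
  replace ((Rpower y (- t) - 1) / t) with (scal (/ t) (exp (- t * ln y) - 1))
    by (unfold Rpower; cbn; unfold mult; cbn; field; exact Ht).
  revert Hexp. apply is_series_ext. intro k. cbn -[fact INR pow]. unfold mult; cbn -[fact INR pow].
  rewrite fact_simpl, mult_INR.
  replace (- t * ln y) with (-1 * t * ln y) by ring.
  rewrite !Rpow_mult_distr. cbn [pow].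
  pose proof (INR_fact_lt_0 k). pose proof (lt_0_INR (S k) (Nat.lt_0_succ k)).
  field. repeat split; lra.
Qed.

Lemma is_series_hurwitz_minus_pole (y t : R) : 0 < y -> 0 < t ->
  is_series (fun n => / Rpower (INR n + y) (1 + t)
                      - (Rpower (INR n + y) (- t) - Rpower (INR n + y + 1) (- t)) / t)
            (hurwitz_zeta (1 + t) y - Rpower y (- t) / t).
Proof.
  intros Hy Ht.
  apply (is_series_minus (V := R_NormedModule)); [apply Series_correct, ex_series_hurwitz; lra|].
  pose proof (is_series_telescope _ 0 (is_lim_seq_Rpower_opp y t Hy Ht)) as HT.
  apply (is_series_scal_l (V := R_NormedModule) (/ t)) in HT.
  replace (Rpower y (- t) / t) with (scal (/ t) (Rpower (INR 0 + y) (- t) - 0))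
    by (cbn; unfold mult; cbn; unfold Rdiv; rewrite Rplus_0_l; ring).
  revert HT. apply is_series_ext. intro n. rewrite S_INR.
  cbn; unfold mult; cbn. replace (INR n + 1 + y) with (INR n + y + 1) by ring. unfold Rdiv; ring.
Qed.

Lemma is_stieltjes_seq_stieltjes_coef (y : R) : 0 < y -> is_stieltjes_seq y (stieltjes_coef y).
Proof.
  intro Hy. exists 1. split; [lra|]. intros s Hs.
  set (t := s - 1). replace s with (1 + t) by (unfold t; ring).
  assert (Ht : 0 < t < 1) by (unfold t; lra).
  set (a := fun n : nat => INR n + y).
  assert (Ha : forall n, 0 < a n) by (intro n; unfold a; pose proof (pos_INR n); lra).
  set (u := fun n k => (-1) ^ k / INR (fact k) * hurwitz_laurent_term k (a n) * t ^ k).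
  assert (Hdouble : is_series (fun k => Series (fun n => u n k))
                      (hurwitz_zeta (1 + t) y - Rpower y (- t) / t)).
  { rewrite <- (is_series_unique _ _ (is_series_hurwitz_minus_pole y t Hy (proj1 Ht))).
    apply (is_series_Series_exchange u
             (fun n k => t ^ k / INR (fact k) * ((ln_max (a n) + 1) ^ k / a n ^ 2))
             (fun n => exp (t * (ln_max (a n) + 1)) / a n ^ 2)).
    - intros n k. apply Rabs_laurent_series_term_le; [apply Ha|lra].
    - intro n. apply is_series_exp_div.
    - apply ex_series_laurent_majorant; assumption.
    - intro n. apply is_series_hurwitz_laurent_term; [apply Ha|lra]. }
  pose proof (is_series_plus (V := R_NormedModule) _ _ _ _ Hdouble
               (is_series_Rpower_opp_minus_1 y t Hy ltac:(lra))) as Hsum.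
  replace (1 + t - 1) with t by ring.
  replace (hurwitz_zeta (1 + t) y - 1 / t)
    with (plus (hurwitz_zeta (1 + t) y - Rpower y (- t) / t) ((Rpower y (- t) - 1) / t))
    by (cbn; unfold plus; cbn; field; lra).
  revert Hsum. apply is_series_ext. intro k. unfold plus; cbn -[pow INR fact].
  unfold stieltjes_coef, u, a.
  rewrite <- (Series_ext (fun n => ((-1) ^ k / INR (fact k) * t ^ k) * hurwitz_laurent_term k (INR n + y)))
    by (intro; ring).
  rewrite Series_scal_l. ring.
Qed.

(** * Functions and power series determined by their values on (x, x + d) *)

Lemma ex_derive_continuous_R (f : R -> R) (x : R) : ex_derive f x -> continuous f x.
Proof. exact (@ex_derive_continuous R_AbsRing R_NormedModule f x). Qed.

Lemma filterlim_at_right_continuous (h : R -> R) (x : R) :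
  continuous h x -> filterlim h (at_right x) (locally (h x)).
Proof. exact (filterlim_filter_le_1 h (filter_le_within (F := locally x) _)). Qed.

Lemma eq_of_continuous_at_right (f g : R -> R) (x d : R) : 0 < d ->
  (forall t, x < t < x + d -> f t = g t) -> continuous f x -> continuous g x -> f x = g x.
Proof.
  intros Hd Hfg Hf Hg.
  apply (filterlim_locally_unique (F := at_right x) f); [now apply filterlim_at_right_continuous|].
  apply (filterlim_ext_loc g); [|now apply filterlim_at_right_continuous].
  exists (mkposreal d Hd). intros t Ht Hxt. symmetry. apply Hfg.
  apply Rabs_lt_between' in Ht. cbn in Ht. lra.
Qed.

Lemma is_derive_eq_at_right (f g : R -> R) (x d l1 l2 : R) : 0 < d ->
  (forall t, x < t < x + d -> f t = g t) -> is_derive f x l1 -> is_derive g x l2 -> l1 = l2.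
Proof.
  intros Hd Hfg Hf Hg.
  assert (Hx : f x = g x).
  { apply (eq_of_continuous_at_right f g x d Hd Hfg);
      apply ex_derive_continuous_R; [exists l1|exists l2]; assumption. }
  pose proof (proj1 (is_derive_Reals _ _ _) (is_derive_minus f g x l1 l2 Hf Hg)) as Hh.
  destruct (Req_dec l1 l2) as [|Hne]; [assumption|exfalso].
  destruct (Hh (Rabs (l1 - l2)) (Rabs_pos_lt _ (Rminus_eq_contra _ _ Hne))) as [[del Hdel] Hquot].
  set (t := Rmin del d / 2).
  assert (Ht : 0 < t < Rmin del d) by (unfold t; pose proof (Rmin_glb_lt _ _ _ Hdel Hd); lra).
  specialize (Hquot t). cbn in Hquot.
  rewrite Hfg, Hx, Rabs_pos_eq in Hquot by (pose proof (Rmin_r del d); lra).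
  replace ((g (x + t) + - g (x + t) - (g x + - g x)) / t - (l1 + - l2)) with (- (l1 - l2))
    in Hquot by (field; lra).
  rewrite Rabs_Ropp in Hquot. apply (Rlt_irrefl (Rabs (l1 - l2))), Hquot; [lra|].
  pose proof (Rmin_l del d); lra.
Qed.

Lemma scal_pow_n (t a : R) (n : nat) :
  scal (V := R_NormedModule) (pow_n (K := AbsRing.Ring R_AbsRing) t n) a = t ^ n * a.
Proof. reflexivity. Qed.

Lemma CV_radius_ge_of_is_pseries (a : nat -> R) (x l : R) :
  is_pseries a x l -> Rbar_le (Rabs x) (CV_radius a).
Proof.
  intro Ha.
  destruct (filterlim_bounded (fun n => scal (pow_n x n) (a n))) as [M HM].
  { exists 0. apply (ex_series_lim_0 (fun n => scal (pow_n x n) (a n))). now exists l. }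
  apply (proj1 (CV_radius_bounded a)). exists M. intro n.
  rewrite Rabs_mult, RPow_abs, Rabs_Rabsolu, <- Rabs_mult, Rmult_comm, <- scal_pow_n. exact (HM n).
Qed.

Lemma is_derive_PSeries_0 (a : nat -> R) (t l : R) : t <> 0 -> is_pseries a t l ->
  is_derive (PSeries a) 0 (a 1%nat).
Proof.
  intros Ht Ha.
  replace (a 1%nat) with (PSeries (PS_derive a) 0) by (rewrite PSeries_0; unfold PS_derive; cbn; ring).
  apply is_derive_PSeries. rewrite Rabs_R0.
  eapply Rbar_lt_le_trans; [|exact (CV_radius_ge_of_is_pseries a t l Ha)].
  now apply Rabs_pos_lt.
Qed.

Lemma is_pseries_eq_at_right_0 (a b : nat -> R) (F : R -> R) (d : R) : 0 < d ->
  (forall t, 0 < t < d -> is_pseries a t (F t)) ->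
  (forall t, 0 < t < d -> is_pseries b t (F t)) -> a O = b O.
Proof.
  intros Hd Ha Hb. rewrite <- !PSeries_0.
  assert (Hcont : forall c, (forall t, 0 < t < d -> is_pseries c t (F t)) -> continuous (PSeries c) 0).
  { intros c Hc. apply ex_derive_continuous_R.
    exists (c 1%nat). apply (is_derive_PSeries_0 c (d / 2) (F (d / 2))); [|apply Hc]; lra. }
  apply (eq_of_continuous_at_right _ _ 0 d Hd); [|apply Hcont..]; [|assumption|assumption].
  intros t Ht.
  now rewrite (is_pseries_unique _ _ _ (Ha t ltac:(lra))), (is_pseries_unique _ _ _ (Hb t ltac:(lra))).
Qed.

Lemma is_pseries_eq_at_right (a b : nat -> R) (F : R -> R) (d : R) : 0 < d ->
  (forall t, 0 < t < d -> is_pseries a t (F t)) ->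
  (forall t, 0 < t < d -> is_pseries b t (F t)) -> forall n, a n = b n.
Proof.
  intros Hd Ha Hb n. revert a b F Ha Hb.
  induction n as [|n IH]; intros a b F Ha Hb; [exact (is_pseries_eq_at_right_0 a b F d Hd Ha Hb)|].
  assert (Hdecr : forall c, (forall t, 0 < t < d -> is_pseries c t (F t)) ->
            forall t, 0 < t < d -> is_pseries (PS_decr_1 c) t ((F t - c O) / t)).
  { intros c Hc t Ht.
    replace ((F t - c O) / t) with (scal (/ t) (plus (F t) (opp (c O))))
      by (cbn; unfold mult, plus, opp; cbn; unfold Rdiv; ring).
    apply (is_pseries_decr_1 c t (/ t)); [cbn; unfold mult; cbn; field; lra|now apply Hc]. }
  apply (IH (PS_decr_1 a) (PS_decr_1 b) (fun t => (F t - a O) / t)); [now apply Hdecr|].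
  rewrite (is_pseries_eq_at_right_0 a b F d Hd Ha Hb). now apply Hdecr.
Qed.

(** * Uniqueness and duplication of the Stieltjes constants *)

Lemma is_stieltjes_seq_is_pseries (y : R) (c : nat -> R) : is_stieltjes_seq y c ->
  exists d, 0 < d /\ forall t, 0 < t < d ->
    is_pseries (fun n => (-1) ^ n / INR (fact n) * c n) t (hurwitz_zeta (1 + t) y - 1 / t).
Proof.
  intros [d [Hd Hc]]. exists d. split; [exact Hd|]. intros t Ht.
  specialize (Hc (1 + t) ltac:(lra)). replace (1 + t - 1) with t in Hc by ring.
  revert Hc. apply is_series_ext. intro n. rewrite scal_pow_n. apply Rmult_comm.
Qed.

Lemma is_stieltjes_seq_unique (y : R) (c1 c2 : nat -> R) :
  is_stieltjes_seq y c1 -> is_stieltjes_seq y c2 -> forall n, c1 n = c2 n.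
Proof.
  intros Hc1 Hc2 n.
  destruct (is_stieltjes_seq_is_pseries y c1 Hc1) as [d1 [Hd1 P1]].
  destruct (is_stieltjes_seq_is_pseries y c2 Hc2) as [d2 [Hd2 P2]].
  pose proof (is_pseries_eq_at_right _ _ _ (Rmin d1 d2) (Rmin_pos _ _ Hd1 Hd2)
                (fun t Ht => P1 t (conj (proj1 Ht) (Rlt_le_trans _ _ _ (proj2 Ht) (Rmin_l _ _))))
                (fun t Ht => P2 t (conj (proj1 Ht) (Rlt_le_trans _ _ _ (proj2 Ht) (Rmin_r _ _)))) n) as E.
  apply Rmult_eq_reg_l in E; [exact E|].
  apply Rmult_integral_contrapositive. split; [apply pow_nonzero; lra|].
  apply Rinv_neq_0_compat, Rgt_not_eq, INR_fact_lt_0.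
Qed.

Lemma stieltjes_seq_spec (y : R) : 0 < y -> is_stieltjes_seq y (stieltjes_seq y).
Proof.
  intro Hy. unfold stieltjes_seq. apply epsilon_spec.
  exists (stieltjes_coef y). now apply is_stieltjes_seq_stieltjes_coef.
Qed.

Lemma gen_stieltjes_eq_stieltjes_coef (n : nat) (y : R) : 0 < y ->
  gen_stieltjes n y = stieltjes_coef y n.
Proof.
  intro Hy. apply (is_stieltjes_seq_unique y);
    [apply stieltjes_seq_spec|apply is_stieltjes_seq_stieltjes_coef]; exact Hy.
Qed.

Definition laurent_coef (y : R) (n : nat) : R := (-1) ^ n / INR (fact n) * gen_stieltjes n y.

Lemma hurwitz_regular_part (y : R) : 0 < y -> exists d, 0 < d /\ forall t, 0 < t < d ->
  is_pseries (laurent_coef y) t (hurwitz_zeta (1 + t) y - 1 / t).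
Proof. intro Hy. exact (is_stieltjes_seq_is_pseries y _ (stieltjes_seq_spec y Hy)). Qed.

Definition exp_quotient_coef (L : R) (n : nat) : R := L ^ S n / INR (fact (S n)).

Lemma is_pseries_exp_minus_1_div (L t : R) : t <> 0 ->
  is_pseries (exp_quotient_coef L) t ((exp (L * t) - 1) / t).
Proof.
  intro Ht. replace ((exp (L * t) - 1) / t) with (scal (/ t) (exp (L * t) - 1))
    by (cbn; unfold mult; cbn; unfold Rdiv; ring).
  eapply is_series_ext;
    [|exact (is_series_scal_l (V := R_NormedModule) _ _ _ (is_series_exp_minus_1 (L * t)))].
  intro n. rewrite scal_pow_n. unfold exp_quotient_coef.
  cbn -[fact INR pow]. unfold mult; cbn -[fact INR pow].
  rewrite Rpow_mult_distr. cbn [pow]. field. split; [apply Rgt_not_eq, INR_fact_lt_0|exact Ht].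
Qed.

Lemma is_derive_laurent_pseries (y : R) : 0 < y ->
  is_derive (PSeries (laurent_coef y)) 0 (laurent_coef y 1%nat).
Proof.
  intro Hy. destruct (hurwitz_regular_part y Hy) as [d [Hd Py]].
  apply (is_derive_PSeries_0 _ (d / 2) (hurwitz_zeta (1 + d / 2) y - 1 / (d / 2))); [lra|apply Py; lra].
Qed.

Definition duplication_defect (y t : R) : R :=
  PSeries (laurent_coef y) t + PSeries (laurent_coef (y + 1 / 2)) t
  - 2 * (exp (ln 2 * t) * PSeries (laurent_coef (2 * y)) t).

Lemma duplication_defect_at_right (y : R) : 0 < y -> exists d, 0 < d /\ forall t, 0 < t < d ->
  duplication_defect y t = 2 * PSeries (exp_quotient_coef (ln 2)) t.
Proof.
  intro Hy.
  destruct (hurwitz_regular_part y Hy) as [d1 [Hd1 P1]].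
  destruct (hurwitz_regular_part (y + 1 / 2) ltac:(lra)) as [d2 [Hd2 P2]].
  destruct (hurwitz_regular_part (2 * y) ltac:(lra)) as [d3 [Hd3 P3]].
  exists (Rmin d1 (Rmin d2 d3)). split; [apply Rmin_pos; [|apply Rmin_pos]; assumption|].
  intros t Ht.
  pose proof (Rmin_l d1 (Rmin d2 d3)). pose proof (Rmin_r d1 (Rmin d2 d3)).
  pose proof (Rmin_l d2 d3). pose proof (Rmin_r d2 d3).
  unfold duplication_defect.
  rewrite (is_pseries_unique _ _ _ (P1 t ltac:(lra))), (is_pseries_unique _ _ _ (P2 t ltac:(lra))),
    (is_pseries_unique _ _ _ (P3 t ltac:(lra))),
    (is_pseries_unique _ _ _ (is_pseries_exp_minus_1_div (ln 2) t ltac:(lra))).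
  pose proof (hurwitz_zeta_duplication (1 + t) y ltac:(lra) Hy) as Hdup.
  replace (Rpower 2 (1 + t)) with (2 * exp (ln 2 * t)) in Hdup
    by (unfold Rpower; rewrite Rmult_plus_distr_r, exp_plus, Rmult_1_l, exp_ln, (Rmult_comm t)
          by lra; ring).
  transitivity (hurwitz_zeta (1 + t) y + hurwitz_zeta (1 + t) (y + 1 / 2)
                - 2 * exp (ln 2 * t) * hurwitz_zeta (1 + t) (2 * y)
                + 2 * ((exp (ln 2 * t) - 1) / t)); [field; lra|rewrite Hdup; ring].
Qed.

Lemma is_derive_duplication_defect (y : R) : 0 < y ->
  is_derive (duplication_defect y) 0
    (laurent_coef y 1%nat + laurent_coef (y + 1 / 2) 1%nat
     - 2 * (ln 2 * exp (ln 2 * 0) * PSeries (laurent_coef (2 * y)) 0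
            + exp (ln 2 * 0) * laurent_coef (2 * y) 1%nat)).
Proof.
  intro Hy.
  assert (Hexp : is_derive (fun t => exp (ln 2 * t)) 0 (ln 2 * exp (ln 2 * 0)))
    by (auto_derive; [exact I|ring]).
  exact (is_derive_minus _ _ _ _ _
           (is_derive_plus _ _ _ _ _ (is_derive_laurent_pseries y Hy)
              (is_derive_laurent_pseries (y + 1 / 2) ltac:(lra)))
           (is_derive_scal _ _ 2 _
              (is_derive_mult _ _ _ _ _ Hexp (is_derive_laurent_pseries (2 * y) ltac:(lra)) Rmult_comm))).
Qed.

Lemma gen_stieltjes_duplication (y : R) : 0 < y ->
  gen_stieltjes 0 y + gen_stieltjes 0 (y + 1 / 2) = 2 * gen_stieltjes 0 (2 * y) + 2 * ln 2 /\
  gen_stieltjes 1 y + gen_stieltjes 1 (y + 1 / 2)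
    = 2 * gen_stieltjes 1 (2 * y) - 2 * ln 2 * gen_stieltjes 0 (2 * y) - ln 2 ^ 2.
Proof.
  intro Hy. destruct (duplication_defect_at_right y Hy) as [d [Hd Heq]].
  pose proof (is_derive_duplication_defect y Hy) as Hf.
  assert (Hg : is_derive (fun t => 2 * PSeries (exp_quotient_coef (ln 2)) t) 0
                         (2 * exp_quotient_coef (ln 2) 1%nat))
    by exact (is_derive_scal _ _ 2 _ (is_derive_PSeries_0 _ 1 _ R1_neq_R0
                                      (is_pseries_exp_minus_1_div (ln 2) 1 R1_neq_R0))).
  pose proof (is_derive_eq_at_right _ _ 0 d _ _ Hd (fun t Ht => Heq t ltac:(lra)) Hf Hg) as Hder.
  pose proof (eq_of_continuous_at_right _ _ 0 d Hd (fun t Ht => Heq t ltac:(lra))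
                (ex_derive_continuous_R _ _ (ex_intro _ _ Hf))
                (ex_derive_continuous_R _ _ (ex_intro _ _ Hg))) as Hval.
  unfold duplication_defect in Hval. rewrite Rmult_0_r, exp_0 in Hval, Hder.
  rewrite !PSeries_0 in Hval. rewrite PSeries_0 in Hder.
  unfold laurent_coef, exp_quotient_coef in Hval, Hder. cbn in Hval, Hder.
  split; [lra|nra].
Qed.

(** * The reflection formula for γ0 *)

Definition harmonic_defect (a : R) : R := / a - (ln (a + 1) - ln a).

Lemma harmonic_defect_bounds (a : R) : 0 < a -> 0 <= harmonic_defect a <= / a - / (a + 1).
Proof.
  intro Ha. unfold harmonic_defect.
  assert (Hln : forall u, -1 < u -> ln (1 + u) <= u).
  { intros u Hu. rewrite <- (ln_exp u) at 2. apply ln_le; [lra|apply exp_ineq1_le]. }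
  assert (Hinv : 0 < / (a + 1) < 1)
    by (split; [apply Rinv_0_lt_compat|rewrite <- Rinv_1; apply Rinv_lt_contravar]; lra).
  pose proof (Rinv_0_lt_compat a Ha).
  assert (E1 : ln (a + 1) - ln a = ln (1 + / a)).
  { rewrite <- ln_div by lra. f_equal. field. lra. }
  assert (E2 : ln (a + 1) - ln a = - ln (1 + - / (a + 1))).
  { rewrite <- ln_div, <- ln_Rinv by lra. f_equal. field. lra. }
  pose proof (Hln (/ a) ltac:(lra)). pose proof (Hln (- / (a + 1)) ltac:(lra)).
  split; lra.
Qed.

Lemma is_series_inv_telescope (y : R) : 0 < y ->
  is_series (fun n => / (INR n + y) - / (INR n + 1 + y)) (/ y).
Proof.
  intro Hy.
  assert (HT : is_lim_seq (fun n => / (INR n + y)) 0).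
  { apply (is_lim_seq_ext (fun n => Rpower (INR n + y) (- (1)))); [|apply is_lim_seq_Rpower_opp; lra].
    intro n. pose proof (pos_INR n). rewrite Rpower_Ropp, Rpower_1; lra. }
  replace (/ y) with (/ (INR 0 + y) - 0) by (cbn; rewrite Rplus_0_l; ring).
  eapply is_series_ext; [|exact (is_series_telescope _ _ HT)]. intro n. cbv beta. now rewrite S_INR.
Qed.

Definition gamma0_tail (y : R) : R := Series (fun n => harmonic_defect (INR n + 1 + y)).

Lemma harmonic_defect_le_majorant (n : nat) (y : R) : - (1 / 2) < y ->
  Rabs (harmonic_defect (INR n + 1 + y)) <= / (INR n + 1 / 2) - / (INR n + 1 + 1 / 2).
Proof.
  intro Hy. pose proof (pos_INR n).
  destruct (harmonic_defect_bounds (INR n + 1 + y)) as [Hnonneg Hle]; [lra|].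
  rewrite Rabs_pos_eq by exact Hnonneg. eapply Rle_trans; [exact Hle|].
  replace (/ (INR n + 1 + y) - / (INR n + 1 + y + 1)) with (/ ((INR n + 1 + y) * (INR n + 1 + y + 1)))
    by (field; lra).
  replace (/ (INR n + 1 / 2) - / (INR n + 1 + 1 / 2)) with (/ ((INR n + 1 / 2) * (INR n + 1 + 1 / 2)))
    by (field; lra).
  apply Rinv_le_contravar; nra.
Qed.

Lemma continuous_gamma0_tail (y : R) : - (1 / 2) < y -> continuous gamma0_tail y.
Proof.
  intro Hy. unfold continuous, gamma0_tail.
  apply (filterlim_Series_dominated (fun z n => harmonic_defect (INR n + 1 + z))
           (fun n => harmonic_defect (INR n + 1 + y)) (fun n => / (INR n + 1 / 2) - / (INR n + 1 + 1 / 2))).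
  - intro n. apply (ex_derive_continuous_R (fun z => harmonic_defect (INR n + 1 + z))).
    unfold harmonic_defect.
    pose proof (pos_INR n). auto_derive. repeat split; lra.
  - exists (mkposreal (y + 1 / 2) ltac:(lra)). intros z Hz n. apply harmonic_defect_le_majorant.
    apply Rabs_lt_between' in Hz. cbn in Hz. lra.
  - intro n. now apply harmonic_defect_le_majorant.
  - exists (/ (1 / 2)). apply is_series_inv_telescope. lra.
Qed.

Definition gamma0_series (y : R) : R := / y - ln (1 + y) + gamma0_tail y.

Lemma gen_stieltjes_0_eq (y : R) : 0 < y -> gen_stieltjes 0 y = gamma0_series y.
Proof.
  intro Hy. rewrite gen_stieltjes_eq_stieltjes_coef by exact Hy.
  unfold stieltjes_coef, gamma0_series, gamma0_tail.
  rewrite (Series_ext _ (fun n => harmonic_defect (INR n + y)))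
    by (intro; unfold hurwitz_laurent_term, harmonic_defect; cbn; field; pose proof (pos_INR n); lra).
  rewrite Series_incr_1.
  2: { apply (ex_series_Rabs_le _ (fun n => / (INR n + y) - / (INR n + 1 + y))).
       - intro n. pose proof (pos_INR n).
         destruct (harmonic_defect_bounds (INR n + y)) as [Hnonneg Hle]; [lra|].
         rewrite Rabs_pos_eq by exact Hnonneg. now replace (INR n + 1 + y) with (INR n + y + 1) by ring.
       - exists (/ y). now apply is_series_inv_telescope. }
  rewrite (Series_ext (fun k => harmonic_defect (INR (S k) + y)) (fun n => harmonic_defect (INR n + 1 + y)))
    by (intro; now rewrite S_INR).
  unfold harmonic_defect. cbn. rewrite Rplus_0_l, (Rplus_comm 1 y). field. lra.
Qed.

Lemma continuous_gamma0_series (y : R) : 0 < y -> continuous gamma0_series y.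
Proof.
  intro Hy. unfold gamma0_series.
  apply (continuous_plus (fun z => / z - ln (1 + z))); [|apply continuous_gamma0_tail; lra].
  apply ex_derive_continuous_R. auto_derive. lra.
Qed.

Lemma gamma0_tail_0 : gamma0_tail 0 = gamma0_series 1.
Proof.
  unfold gamma0_series, gamma0_tail.
  rewrite (Series_incr_1 (fun n => harmonic_defect (INR n + 1 + 0))).
  2: { apply (ex_series_Rabs_le _ (fun n => / (INR n + 1 / 2) - / (INR n + 1 + 1 / 2))).
       - intro. apply harmonic_defect_le_majorant. lra.
       - exists (/ (1 / 2)). apply is_series_inv_telescope. lra. }
  rewrite (Series_ext (fun k => harmonic_defect (INR (S k) + 1 + 0))
                      (fun n => harmonic_defect (INR n + 1 + 1))) by (intro; rewrite S_INR; f_equal; ring).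
  unfold harmonic_defect. cbn. replace (0 + 1 + 0) with 1 by ring. replace (1 + 1) with 2 by ring.
  rewrite ln_1. field.
Qed.

Lemma mult_pow_half_in_unit (c : R) (k : nat) : 0 < c < 1 -> 0 < c * (1 / 2) ^ k < 1.
Proof.
  intro Hc. pose proof (pow_lt (1 / 2) k ltac:(lra)).
  pose proof (pow_incr (1 / 2) 1 k ltac:(lra)) as Hle. rewrite pow1 in Hle. split; nra.
Qed.

Lemma herglotz_halving (D : R -> R) (M c : R) :
  (forall y, 0 < y < 1 -> Rabs (D y) <= M) ->
  (forall y, 0 < y < 1 -> D (y / 2) + D ((y + 1) / 2) = 2 * D y) ->
  0 < c < 1 -> Rabs (D c) = M -> forall k, Rabs (D (c * (1 / 2) ^ k)) = M.
Proof.
  intros Hbound Hdup Hc HDc k. induction k as [|k IH]; [now rewrite pow_O, Rmult_1_r|].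
  pose proof (mult_pow_half_in_unit c k Hc) as Hz.
  set (z := c * (1 / 2) ^ k) in *.
  replace (c * (1 / 2) ^ S k) with (z / 2) by (unfold z; cbn; field).
  pose proof (Hbound (z / 2) ltac:(lra)). pose proof (Hbound ((z + 1) / 2) ltac:(lra)).
  pose proof (Rabs_triang (D (z / 2)) (D ((z + 1) / 2))) as Htri.
  rewrite Hdup, Rabs_mult, IH, Rabs_pos_eq in Htri by lra. lra.
Qed.

Lemma herglotz (D : R -> R) :
  (forall y, 0 < y < 1 -> continuous D y) ->
  (forall y, 0 < y < 1 -> D (1 - y) = - D y) ->
  (forall y, 0 < y < 1 -> D (y / 2) + D ((y + 1) / 2) = 2 * D y) ->
  filterlim D (at_right 0) (locally 0) ->
  forall y, 0 < y < 1 -> D y = 0.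
Proof.
  intros Hcont Hodd Hdup Hlim.
  (* D extends to G, continuous on (-oo, 1) with G 0 = 0.  At a maximum point c of |G| on
     [0, 1/2], the duplication identity forces |D (c / 2^k)| = |D c| for all k, and k -> oo
     gives |D c| = 0. *)
  destruct (C0_extension_left D 0 0 1 Rlt_0_1 Hcont Hlim) as [G [HGcont [HGD HG0]]].
  destruct (continuity_ab_maj (fun z => Rabs (G z)) 0 (1 / 2) ltac:(lra)) as [c [Hmax Hc]].
  { intros z Hz. apply continuity_pt_filterlim, (continuous_Rabs_comp G), HGcont. lra. }
  assert (Hbound : forall z, 0 < z < 1 -> Rabs (D z) <= Rabs (G c)).
  { intros z Hz. destruct (Rle_dec z (1 / 2)).
    - rewrite <- HGD by lra. apply Hmax. lra.
    - replace z with (1 - (1 - z)) by ring. rewrite Hodd, Rabs_Ropp, <- HGD by lra. apply Hmax. lra. }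
  assert (HGc : Rabs (G c) = 0).
  { destruct (Req_dec c 0) as [->|Hne]; [now rewrite HG0, Rabs_R0|].
    rewrite HGD in Hbound |- * by lra.
    pose proof (herglotz_halving D _ c Hbound Hdup ltac:(lra) eq_refl) as Hhalf.
    assert (Hto0 : is_lim_seq (fun k => c * (1 / 2) ^ k) 0).
    { replace (Finite 0) with (Rbar_mult c 0) by (cbn; f_equal; ring).
      apply is_lim_seq_scal_l, is_lim_seq_geom. rewrite Rabs_pos_eq; lra. }
    assert (Hseq : is_lim_seq (fun k => Rabs (G (c * (1 / 2) ^ k))) (Rabs (G 0)))
      by exact (filterlim_comp _ _ _ _ (fun z => Rabs (G z)) _ (locally 0) _ Hto0
                  (continuous_Rabs_comp G 0 (HGcont 0 Rlt_0_1))).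
    rewrite HG0, Rabs_R0 in Hseq.
    apply (is_lim_seq_ext _ (fun _ => Rabs (D c))) in Hseq.
    - apply is_lim_seq_unique in Hseq. rewrite Lim_seq_const in Hseq. now injection Hseq.
    - intro k. rewrite HGD; [apply Hhalf|apply mult_pow_half_in_unit; lra]. }
  intros y Hy. apply Rabs_eq_0. pose proof (Hbound y Hy). pose proof (Rabs_pos (D y)). lra.
Qed.

Lemma cot_duplication (y : R) : 0 < y < 1 ->
  cot (PI * (y / 2)) + cot (PI * ((y + 1) / 2)) = 2 * cot (PI * y).
Proof.
  intro Hy. pose proof PI_RGT_0. set (a := PI * (y / 2)).
  replace (PI * ((y + 1) / 2)) with (a + PI / 2) by (unfold a; field).
  replace (PI * y) with (2 * a) by (unfold a; field).
  assert (0 < sin a) by (apply sin_gt_0; unfold a; nra).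
  assert (0 < cos a) by (apply cos_gt_0; unfold a; nra).
  unfold cot. rewrite cos_plus, sin_plus, cos_PI2, sin_PI2, sin_2a, cos_2a.
  field. split; lra.
Qed.

Lemma cot_reflection (y : R) : cot (PI * (1 - y)) = - cot (PI * y).
Proof.
  unfold cot. replace (PI * (1 - y)) with (PI - PI * y) by ring.
  rewrite Rtrigo_facts.cos_pi_minus, sin_PI_x. unfold Rdiv. ring.
Qed.

Lemma Rabs_inv_minus_pi_cot_le (y : R) : 0 < y <= 1 / 4 ->
  Rabs (/ y - PI * cot (PI * y)) <= PI ^ 2 * y.
Proof.
  intro Hy. pose proof PI_4. pose proof PI_RGT_0.
  set (u := PI * y). assert (Hu : 0 < u <= 1) by (unfold u; nra).
  assert (Hsin : u - u ^ 3 / 6 <= sin u).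
  { destruct (pre_sin_bound u 0) as [Hs _]; [lra|lra|].
    unfold sin_approx, sin_term in Hs. cbn in Hs. lra. }
  assert (Hcos : 1 - u ^ 2 / 2 <= cos u).
  { destruct (pre_cos_bound u 0) as [Hc _]; [lra|lra|].
    unfold cos_approx, cos_term in Hc. cbn in Hc. lra. }
  pose proof (sin_lt_x u ltac:(lra)). pose proof (COS_bound u).
  assert (Hsin_pos : u / 2 <= sin u) by nra.
  unfold cot. replace PI with (u / y) at 1 by (unfold u; field; lra).
  replace (/ y - u / y * (cos u / sin u)) with ((sin u - u * cos u) / (y * sin u)) by (field; lra).
  unfold Rdiv. rewrite Rabs_mult, Rabs_inv, (Rabs_pos_eq (y * sin u)) by nra.
  apply (Rmult_le_reg_r (y * sin u)); [nra|].
  rewrite Rmult_assoc, Rinv_l, Rmult_1_r by nra.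
  replace (PI ^ 2 * y * (y * sin u)) with (u ^ 2 * sin u) by (unfold u; ring).
  apply Rabs_le. split; nra.
Qed.

Lemma filterlim_inv_minus_pi_cot :
  filterlim (fun y => / y - PI * cot (PI * y)) (at_right 0) (locally 0).
Proof.
  apply (filterlim_locally (F := at_right 0)). intros [eps Heps].
  pose proof PI_RGT_0. assert (HPI2 : 0 < PI ^ 2) by (apply pow_lt; lra).
  set (m := Rmin (1 / 4) (eps / PI ^ 2)).
  assert (Hm : 0 < m <= 1 / 4 /\ PI ^ 2 * m <= eps).
  { unfold m. pose proof (Rmin_l (1 / 4) (eps / PI ^ 2)). pose proof (Rmin_r (1 / 4) (eps / PI ^ 2)) as Hr.
    pose proof (Rmin_pos (1 / 4) (eps / PI ^ 2) ltac:(lra) (Rdiv_lt_0_compat _ _ Heps HPI2)).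
    apply (Rmult_le_compat_l (PI ^ 2)) in Hr; [|lra].
    replace (PI ^ 2 * (eps / PI ^ 2)) with eps in Hr by (field; lra). lra. }
  exists (mkposreal m (proj1 (proj1 Hm))). intros y Hy Hpos.
  apply Rabs_lt_between' in Hy. cbn [pos] in Hy.
  change (Rabs (/ y - PI * cot (PI * y) - 0) < eps). rewrite Rminus_0_r.
  eapply Rle_lt_trans; [apply Rabs_inv_minus_pi_cot_le; lra|]. nra.
Qed.

Definition reflection_defect (y : R) : R :=
  gamma0_series y - gamma0_series (1 - y) - PI * cot (PI * y).

Lemma continuous_reflection_defect (y : R) : 0 < y < 1 -> continuous reflection_defect y.
Proof.
  intro Hy. unfold reflection_defect.
  apply (continuous_minus (fun z => gamma0_series z - gamma0_series (1 - z))).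
  - apply (continuous_minus gamma0_series (fun z => gamma0_series (1 - z)));
      [apply continuous_gamma0_series; lra|].
    apply (continuous_comp (fun z => 1 - z) gamma0_series); [|apply continuous_gamma0_series; lra].
    apply ex_derive_continuous_R. auto_derive. exact I.
  - apply ex_derive_continuous_R. unfold cot. auto_derive.
    apply Rgt_not_eq, sin_gt_0; pose proof PI_RGT_0; nra.
Qed.

Lemma reflection_defect_reflection (y : R) : reflection_defect (1 - y) = - reflection_defect y.
Proof.
  unfold reflection_defect. rewrite cot_reflection. replace (1 - (1 - y)) with y by ring. ring.
Qed.

Lemma reflection_defect_duplication (y : R) : 0 < y < 1 ->
  reflection_defect (y / 2) + reflection_defect ((y + 1) / 2) = 2 * reflection_defect y.
Proof.
  intro Hy. unfold reflection_defect.
  destruct (gen_stieltjes_duplication (y / 2) ltac:(lra)) as [Hy1 _].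
  destruct (gen_stieltjes_duplication ((1 - y) / 2) ltac:(lra)) as [Hy2 _].
  rewrite !gen_stieltjes_0_eq in Hy1, Hy2 by lra.
  replace (y / 2 + 1 / 2) with ((y + 1) / 2) in Hy1 by field.
  replace ((1 - y) / 2 + 1 / 2) with (1 - y / 2) in Hy2 by field.
  replace (2 * (y / 2)) with y in Hy1 by field. replace (2 * ((1 - y) / 2)) with (1 - y) in Hy2 by field.
  replace (1 - (y + 1) / 2) with ((1 - y) / 2) by field.
  pose proof (cot_duplication y Hy). nra.
Qed.

Lemma filterlim_reflection_defect : filterlim reflection_defect (at_right 0) (locally 0).
Proof.
  set (Rem := fun z => - ln (1 + z) + gamma0_tail z - gamma0_series (1 - z)).
  assert (HRem0 : Rem 0 = 0) by (unfold Rem; rewrite Rplus_0_r, Rminus_0_r, ln_1, gamma0_tail_0; ring).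
  assert (HRem : continuous Rem 0).
  { apply (continuous_minus (fun z => - ln (1 + z) + gamma0_tail z)).
    - apply (continuous_plus (fun z => - ln (1 + z))); [|apply continuous_gamma0_tail; lra].
      apply ex_derive_continuous_R. auto_derive. lra.
    - apply (continuous_comp (fun z => 1 - z) gamma0_series);
        [|rewrite Rminus_0_r; apply continuous_gamma0_series; lra].
      apply ex_derive_continuous_R. auto_derive. exact I. }
  assert (Hlim : filterlim reflection_defect (at_right 0) (locally (plus 0 (Rem 0)))).
  { apply (filterlim_ext (fun z => plus (/ z - PI * cot (PI * z)) (Rem z))).
    - intro z. unfold reflection_defect, Rem, gamma0_series, plus. cbn. ring.
    - eapply filterlim_comp_2;
        [apply filterlim_inv_minus_pi_cot|apply filterlim_at_right_continuous, HRem|].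
      apply (@filterlim_plus R_AbsRing R_NormedModule). }
  rewrite HRem0 in Hlim. change (plus 0 0) with (0 + 0) in Hlim. now rewrite Rplus_0_r in Hlim.
Qed.

Lemma gen_stieltjes_0_reflection (y : R) : 0 < y < 1 ->
  gen_stieltjes 0 y - gen_stieltjes 0 (1 - y) = PI * cot (PI * y).
Proof.
  intro Hy. rewrite !gen_stieltjes_0_eq by lra.
  pose proof (herglotz reflection_defect continuous_reflection_defect
                (fun z _ => reflection_defect_reflection z) reflection_defect_duplication
                filterlim_reflection_defect y Hy) as HD.
  unfold reflection_defect in HD. lra.
Qed.

Theorem mainTheorem8 (x : R) (hx : 0 < x < 1 / 2) :
  gen_stieltjes 1 (x + 1 / 2) - gen_stieltjes 1 (1 / 2 - x)
  = 2 * (gen_stieltjes 1 (2 * x) - gen_stieltjes 1 (1 - 2 * x))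
    - (gen_stieltjes 1 x - gen_stieltjes 1 (1 - x))
    - 2 * PI * ln 2 * cot (2 * PI * x).
Proof.
  destruct (gen_stieltjes_duplication x ltac:(lra)) as [_ Hx].
  destruct (gen_stieltjes_duplication (1 / 2 - x) ltac:(lra)) as [_ Hx'].
  replace (1 / 2 - x + 1 / 2) with (1 - x) in Hx' by lra.
  replace (2 * (1 / 2 - x)) with (1 - 2 * x) in Hx' by lra.
  pose proof (gen_stieltjes_0_reflection (2 * x) ltac:(lra)) as Hrefl.
  replace (2 * PI * x) with (PI * (2 * x)) by ring.
  replace (2 * PI * ln 2 * cot (PI * (2 * x))) with (2 * ln 2 * (PI * cot (PI * (2 * x)))) by ring.
  rewrite <- Hrefl. nra.
Qed.
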